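(* For all $t>0$ and $z\in\mathbb{C}$, $$|R(t,z)|\le 2\Lambda\Big(-\frac{\sqrt t}{\sqrt2}\Big)e^{|\mathrm{Re}(z)|}.$$
   Context: $\Lambda(z):=e^{z^2}(1-\mathrm{erf}(z))$ for $z\in\mathbb{C}$; $R(t,z):=e^z\Lambda\big(\frac{z}{2\sqrt{it}}-\sqrt{it}\big)-e^{-z}\Lambda\big(\frac{z}{2\sqrt{it}}+\sqrt{it}\big)$ for $t>0$, $z\in\mathbb{C}$, with principal square roots ($\sqrt{i}=e^{i\pi/4}$). *)

From Stdlib Require Import Reals.
From Coquelicot Require Import Coquelicot.
Open Scope R_scope.

Definition Cexp (z : C) : C :=
  (exp (Re z) * cos (Im z), exp (Re z) * sin (Im z)).

(* principal square root (branch cut on the negative real axis,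
   Re (Csqrt z) >= 0, and Im (Csqrt z) >= 0 when Re (Csqrt z) = 0) *)
Definition Csqrt (z : C) : C :=
  (sqrt ((Cmod z + Re z) / 2),
   (if Rle_dec 0 (Im z) then 1 else -1) * sqrt ((Cmod z - Re z) / 2)).

(* error function, erf z = 2/sqrt(pi) * int_0^z e^{-w^2} dw,
   integrated along the segment w = s z, s in [0,1] *)
Definition Cerf (z : C) : C :=
  Cmult (RtoC (2 / sqrt PI))
    (RInt (V := C_R_CompleteNormedModule)
       (fun s : R => Cmult z (Cexp (Copp (Cmult (Cmult (RtoC s) z) (Cmult (RtoC s) z)))))
       0 1).

Definition Lambda (z : C) : C :=
  Cmult (Cexp (Cmult z z)) (Cminus (RtoC 1) (Cerf z)).

Definition Rfun (t : R) (z : C) : C :=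
  let s := Csqrt (Cmult Ci (RtoC t)) in
  Cminus (Cmult (Cexp z) (Lambda (Cminus (Cdiv z (Cmult (RtoC 2) s)) s)))
         (Cmult (Cexp (Copp z)) (Lambda (Cplus (Cdiv z (Cmult (RtoC 2) s)) s))).

(* Write s = sqrt(it) and c = z/(2s).  Since (c+s)^2 - (c-s)^2 = 4cs = 2z, the two
   exponential prefactors of R agree, e^z e^{(c-s)^2} = e^{-z} e^{(c+s)^2}, so the
   constant terms of Lambda cancel and
     R(t,z) = e^{z+(c-s)^2} (2/sqrt pi) (E(c+s) - E(c-s)),
   where erf w = (2/sqrt pi) E(w) and E(w) = int_0^1 w e^{-(rw)^2} dr is the
   integral of e^{-u^2} along the ray [0,w].  Differentiating E along the line
   l |-> c + l s (differentiation under the integral sign, then the fundamental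
   theorem of calculus in the ray variable) turns E(c+s) - E(c-s) into the
   segment integral int_{-1}^{1} s e^{-(c+ls)^2} dl.  As s^2 = it is purely
   imaginary, Re((c+ls)^2) = Re(c^2) + l Re z, which bounds the integrand by
   |s| e^{-Re(c^2)+|Re z|} and gives |R| <= (4/sqrt pi) sqrt t e^{|Re z|}.
   Finally 2 sqrt t / sqrt pi <= e^{t/2} <= Re Lambda(-sqrt(t/2)), the last step
   because erf is nonpositive on the negative real axis. *)

From Stdlib Require Import Reals Lra.
From Coquelicot Require Import Coquelicot.
Open Scope R_scope.

Lemma Cexp_add (x y : C) : Cexp (x + y)%C = (Cexp x * Cexp y)%C.
Proof.
  destruct x as [x1 x2], y as [y1 y2]; unfold Cexp, Cplus, Cmult, Re, Im; simpl.
  rewrite exp_plus, cos_plus, sin_plus; apply injective_projections; simpl; ring.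
Qed.

Lemma Cmod_Cexp (x : C) : Cmod (Cexp x) = exp (Re x).
Proof.
  destruct x as [x1 x2]; unfold Cmod, Cexp, Re, Im; simpl.
  replace (exp x1 * cos x2 * (exp x1 * cos x2 * 1) + exp x1 * sin x2 * (exp x1 * sin x2 * 1))
    with (exp x1 * exp x1 * (Rsqr (sin x2) + Rsqr (cos x2))) by (unfold Rsqr; ring).
  rewrite sin2_cos2, Rmult_1_r; apply sqrt_square; left; apply exp_pos.
Qed.

Lemma exp_le_compat (x y : R) : x <= y -> exp x <= exp y.
Proof.
  intros [Hlt | ->]; [left; apply exp_increasing, Hlt | right; reflexivity].
Qed.

Lemma norm_C_R (x : C) : norm (K := R_AbsRing) (V := C_R_NormedModule) x = Cmod x.
Proof. rewrite Cmod_norm. reflexivity. Qed.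

Definition erf_kernel (w : C) (s : R) : C := (w * Cexp (- ((s * w) * (s * w))))%C.
Definition ray_integral (w : C) : C :=
  RInt (V := C_R_CompleteNormedModule) (erf_kernel w) 0 1.
Lemma Cerf_ray_integral (w : C) : Cerf w = (RtoC (2 / sqrt PI) * ray_integral w)%C.
Proof. reflexivity. Qed.

Lemma RInt_C_components (f : R -> C) (a b : R) :
  ex_RInt (fun s => fst (f s)) a b -> ex_RInt (fun s => snd (f s)) a b ->
  RInt (V := C_R_CompleteNormedModule) f a b
  = (RInt (fun s => fst (f s)) a b, RInt (fun s => snd (f s)) a b).
Proof.
  intros H1 H2. apply (@is_RInt_unique C_R_CompleteNormedModule).
  apply (is_RInt_fct_extend_pair (U := R_NormedModule) (V := R_NormedModule));
    apply (@RInt_correct R_CompleteNormedModule); assumption.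
Qed.

Lemma continuity_2d_pt_snd (g : R -> R -> R) (l s : R) :
  continuity_2d_pt g l s -> continuous (g l) s.
Proof.
  intros Hg. apply continuity_2d_pt_filterlim in Hg.
  apply (continuous_comp (fun s => (l, s)) (fun p => g (fst p) (snd p))); [|exact Hg].
  apply (continuous_comp_2 (fun _ => l) (fun s => s) pair);
    [apply continuous_const | apply continuous_id | ].
  apply continuous_ext with (f := fun p => p); [now intros [] | apply continuous_id].
Qed.

Lemma is_derive_RInt_exact (f g h : R -> R -> R) (a b l : R) :
  (forall l s, is_derive (fun l => f l s) l (g l s)) ->
  (forall l s, is_derive (h l) s (g l s)) ->
  (forall l s, continuity_2d_pt g l s) ->
  (forall l s, continuous (f l) s) ->
  is_derive (fun l => RInt (f l) a b) l (h l b - h l a).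
Proof.
  intros Hf Hh Hg Hcf.
  assert (Hgh : RInt (fun s => Derive (fun u => f u s) l) a b = h l b - h l a).
  { apply is_RInt_unique.
    apply (is_RInt_ext (g l)); [intros s _; symmetry; apply is_derive_unique, Hf|].
    apply (is_RInt_derive (h l) (g l)); intros s _;
      [apply Hh | apply continuity_2d_pt_snd, Hg]. }
  rewrite <- Hgh.
  apply (is_derive_RInt_param f a b l).
  - apply filter_forall; intros x s _; eexists; apply Hf.
  - intros s _. apply (continuity_2d_pt_ext g); [|apply Hg].
    intros x y; symmetry; apply is_derive_unique, Hf.
  - apply filter_forall; intros x. apply (@ex_RInt_continuous R_CompleteNormedModule).
    intros s _; apply Hcf.
Qed.

Ltac continuity_2d :=
  match goal with
  | |- continuity_2d_pt (fun u v => @?f u v + @?g u v) _ _ =>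
      apply (continuity_2d_pt_plus f g); continuity_2d
  | |- continuity_2d_pt (fun u v => @?f u v - @?g u v) _ _ =>
      apply (continuity_2d_pt_minus f g); continuity_2d
  | |- continuity_2d_pt (fun u v => @?f u v * @?g u v) _ _ =>
      apply (continuity_2d_pt_mult f g); continuity_2d
  | |- continuity_2d_pt (fun u v => - @?f u v) _ _ =>
      apply (continuity_2d_pt_opp f); continuity_2d
  | |- continuity_2d_pt (fun u v => u) _ _ => apply continuity_2d_pt_id1
  | |- continuity_2d_pt (fun u v => v) _ _ => apply continuity_2d_pt_id2
  | |- continuity_2d_pt (fun u v => exp (@?f u v)) _ _ =>
      apply (continuity_1d_2d_pt_comp exp f);
      [apply derivable_continuous_pt, derivable_pt_exp | continuity_2d]
  | |- continuity_2d_pt (fun u v => cos (@?f u v)) _ _ =>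
      apply (continuity_1d_2d_pt_comp cos f);
      [apply derivable_continuous_pt, derivable_pt_cos | continuity_2d]
  | |- continuity_2d_pt (fun u v => sin (@?f u v)) _ _ =>
      apply (continuity_1d_2d_pt_comp sin f);
      [apply derivable_continuous_pt, derivable_pt_sin | continuity_2d]
  | |- continuity_2d_pt (fun u v => _) _ _ => apply continuity_2d_pt_const
  end.

(* The l-derivative of the ray
   kernel and the s-derivative of [antideriv] coincide (both equal [mixed]),
   which is the computation behind d/dl E(c + l a) = a e^{-(c+la)^2}.
   Everything is done on the real and imaginary parts k = fst, snd, since the
   parametric-integral theorem is available for real-valued functions. *)
Section Segment.
Variables c a : C.
Definition seg (l : R) : C := (c + l * a)%C.
Definition kernel (l s : R) : C := erf_kernel (seg l) s.
Definition antideriv (l s : R) : C := (s * (a * Cexp (- ((s * seg l) * (s * seg l)))))%C.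
Definition mixed (l s : R) : C :=
  (a * (Cexp (- ((s * seg l) * (s * seg l))) * (1 - 2 * ((s * seg l) * (s * seg l)))))%C.

Ltac expand := unfold kernel, antideriv, mixed, erf_kernel, seg, Cexp;
  destruct c as [c1 c2]; destruct a as [a1 a2];
  unfold Cmult, Cplus, Cminus, Copp, RtoC, Re, Im; simpl.

Lemma kernel_calculus (k : C -> R) (l s : R) : k = fst \/ k = snd ->
  is_derive (fun l => k (kernel l s)) l (k (mixed l s)) /\
  is_derive (fun s => k (antideriv l s)) s (k (mixed l s)) /\
  continuous (fun s => k (kernel l s)) s /\
  continuous (fun l => k (a * Cexp (- (seg l * seg l)))%C) l.
Proof.
  intros [-> | ->]; (split; [|split; [|split]]);
    try apply (@ex_derive_continuous R_AbsRing R_NormedModule);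
    expand; auto_derive; trivial; unfold Rminus; ring.
Qed.

Lemma mixed_continuous (k : C -> R) (l s : R) : k = fst \/ k = snd ->
  continuity_2d_pt (fun l s => k (mixed l s)) l s.
Proof. intros [-> | ->]; expand; continuity_2d. Qed.

Lemma ray_integral_seg_derive (k : C -> R) (l : R) : k = fst \/ k = snd ->
  is_derive (fun l => k (ray_integral (seg l))) l (k (a * Cexp (- (seg l * seg l)))%C).
Proof.
  intros Hk.
  apply is_derive_ext with (fun l => RInt (fun s => k (kernel l s)) 0 1).
  { intros x. unfold ray_integral. rewrite RInt_C_components.
    - destruct Hk as [-> | ->]; reflexivity.
    - apply (@ex_RInt_continuous R_CompleteNormedModule); intros s _.
      apply (kernel_calculus fst x s); auto.
    - apply (@ex_RInt_continuous R_CompleteNormedModule); intros s _.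
      apply (kernel_calculus snd x s); auto. }
  assert (Hb : antideriv l 1 = (a * Cexp (- (seg l * seg l)))%C)
    by (unfold antideriv; rewrite !Cmult_1_l; reflexivity).
  assert (Ha : antideriv l 0 = 0%C)
    by (unfold antideriv; rewrite Cmult_0_l; reflexivity).
  replace (k (a * Cexp (- (seg l * seg l)))%C) with (k (antideriv l 1) - k (antideriv l 0))
    by (rewrite Hb, Ha; destruct Hk as [-> | ->]; simpl; ring).
  apply (is_derive_RInt_exact (fun l s => k (kernel l s)) (fun l s => k (mixed l s))
           (fun l s => k (antideriv l s))); intros x s;
    try apply mixed_continuous; try apply (kernel_calculus k x s); auto.
Qed.

Lemma ray_integral_segment (x y : R) :
  is_RInt (V := C_R_CompleteNormedModule) (fun l => a * Cexp (- (seg l * seg l)))%C x y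
    (ray_integral (seg y) - ray_integral (seg x))%C.
Proof.
  apply (is_RInt_fct_extend_pair (U := R_NormedModule) (V := R_NormedModule));
  [ apply (is_RInt_derive (fun l => fst (ray_integral (seg l))))
  | apply (is_RInt_derive (fun l => snd (ray_integral (seg l)))) ];
  intros l _; try apply ray_integral_seg_derive; try apply (kernel_calculus _ l 0); auto.
Qed.
End Segment.

(* With c = z/(2s), the two exponential prefactors of the difference coincide, so
   e^z Lambda(c-s) - e^{-z} Lambda(c+s) = e^{z+(c-s)^2} (2/sqrt pi) (E(c+s) - E(c-s)). *)
Lemma Lambda_pair_factor (z s : C) : s <> 0%C ->
  let c := (z / (RtoC 2 * s))%C in
  (Cexp z * Lambda (c - s) - Cexp (- z) * Lambda (c + s))%C
  = (Cexp (z + (c - s) * (c - s)) * RtoC (2 / sqrt PI)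
     * (ray_integral (c + s) - ray_integral (c - s)))%C.
Proof.
  intros Hs c. unfold Lambda. rewrite !Cerf_ray_integral.
  assert (Hexp : (Cexp (- z) * Cexp ((c + s) * (c + s)))%C
                 = (Cexp z * Cexp ((c - s) * (c - s)))%C).
  { rewrite <- !Cexp_add. f_equal. unfold c. field. exact Hs. }
  rewrite Cexp_add, (Cmult_assoc (Cexp (- z))), Hexp. ring.
Qed.

(* For s^2 purely imaginary, Re((c + l s)^2) = Re(c^2) + l Re z, since 2cs = z. *)
Lemma Re_seg_square (z s : C) (l : R) : s <> 0%C -> Re (s * s)%C = 0 ->
  let c := (z / (RtoC 2 * s))%C in
  Re (seg c s l * seg c s l)%C = Re (c * c)%C + l * Re z.
Proof.
  intros Hs Hss c.
  assert (Hz : z = (RtoC 2 * c * s)%C) by (unfold c; field; exact Hs).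
  rewrite Hz. clearbody c. unfold seg.
  destruct c as [c1 c2], s as [s1 s2]; unfold Re, Cmult, Cplus, RtoC in *; simpl in *.
  nra.
Qed.

Lemma Lambda_pair_bound (z s : C) : s <> 0%C -> Re (s * s)%C = 0 ->
  let c := (z / (RtoC 2 * s))%C in
  Cmod (Cexp z * Lambda (c - s) - Cexp (- z) * Lambda (c + s))%C
  <= 4 / sqrt PI * Cmod s * exp (Rabs (Re z)).
Proof.
  intros Hs Hss c.
  assert (Hpi : 0 < sqrt PI) by (apply sqrt_lt_R0, PI_RGT_0).
  assert (Hm : (c - s)%C = seg c s (-1)).
  { unfold seg; destruct c, s; unfold Cminus, Cplus, Cmult, Copp, RtoC; simpl.
    apply injective_projections; simpl; ring. }
  assert (Hp : (c + s)%C = seg c s 1) by (unfold seg; rewrite Cmult_1_l; reflexivity).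
  set (M := Cmod s * exp (- Re (c * c)%C + Rabs (Re z))).
  assert (Hint : Cmod (ray_integral (c + s) - ray_integral (c - s))%C <= 2 * M).
  { rewrite Hm, Hp, <- norm_C_R.
    replace (2 * M) with ((1 - -1) * M) by ring.
    apply (norm_RInt_le (fun l => s * Cexp (- (seg c s l * seg c s l)))%C
             (fun _ => M) (-1) 1 _ _);
      [lra | | apply ray_integral_segment | apply (is_RInt_const (V := R_NormedModule))].
    intros l Hl. rewrite norm_C_R, Cmod_mult, Cmod_Cexp.
    apply Rmult_le_compat_l; [apply Cmod_ge_0|].
    apply exp_le_compat.
    change (Re (- ?w)%C) with (- Re w).
    pose proof (Re_seg_square z s l Hs Hss) as Hr; cbv zeta in Hr; fold c in Hr.
    rewrite Hr.
    destruct (Rle_dec 0 (Re z)); [rewrite Rabs_pos_eq | rewrite Rabs_left]; nra. }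
  assert (Hexp : Re (z + (c - s) * (c - s))%C = Re (c * c)%C).
  { pose proof (Re_seg_square z s (-1) Hs Hss) as Hr; cbv zeta in Hr; fold c in Hr.
    change (Re (z + ?w)%C) with (Re z + Re w). rewrite Hm, Hr. ring. }
  pose proof (Lambda_pair_factor z s Hs) as Hf; cbv zeta in Hf; fold c in Hf.
  rewrite Hf, !Cmod_mult, Cmod_Cexp, Cmod_R, Hexp.
  rewrite Rabs_pos_eq by (left; apply Rdiv_lt_0_compat; lra).
  apply Rle_trans with (exp (Re (c * c)%C) * (2 / sqrt PI) * (2 * M)).
  { apply Rmult_le_compat_l; [|exact Hint].
    apply Rmult_le_pos; [left; apply exp_pos | left; apply Rdiv_lt_0_compat; lra]. }
  unfold M. rewrite exp_plus, exp_Ropp.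
  right. field. split; [lra | apply Rgt_not_eq, exp_pos].
Qed.

Lemma Re_ray_integral_neg_real (x : R) : 0 <= x -> Re (ray_integral (RtoC (- x))) <= 0.
Proof.
  intros Hx. unfold ray_integral.
  assert (Hcont : forall k : C -> R, k = fst \/ k = snd ->
            ex_RInt (fun s => k (erf_kernel (RtoC (- x)) s)) 0 1).
  { intros k Hk. apply (@ex_RInt_continuous R_CompleteNormedModule); intros s _.
    apply (@ex_derive_continuous R_AbsRing R_NormedModule).
    destruct Hk as [-> | ->]; unfold erf_kernel, Cexp, Cmult, Copp, RtoC, Re, Im; simpl;
      auto_derive; trivial. }
  rewrite RInt_C_components by (apply Hcont; auto). unfold Re; cbn [fst].
  apply Rle_trans with (RInt (fun _ => 0) 0 1).
  2:{ rewrite RInt_const; unfold scal; simpl; unfold mult; simpl; lra. }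
  apply RInt_le; [lra | apply Hcont; auto | apply ex_RInt_const |].
  intros s _. unfold erf_kernel, Cexp, Cmult, Copp, RtoC, Re, Im; simpl.
  match goal with |- context [cos ?a] => replace a with 0 by ring end.
  match goal with |- context [sin ?a] => replace a with 0 by ring end.
  rewrite cos_0, sin_0.
  match goal with |- context [exp ?a] => pose proof (exp_pos a); set (E := exp a) in * end.
  nra.
Qed.

Lemma Lambda_neg_real_ge (x : R) : 0 <= x -> exp (x * x) <= Re (Lambda (RtoC (- x))).
Proof.
  intros Hx. pose proof (Re_ray_integral_neg_real x Hx) as HE.
  assert (Hpi : 0 < 2 / sqrt PI) by (apply Rdiv_lt_0_compat; [lra | apply sqrt_lt_R0, PI_RGT_0]).
  unfold Lambda. rewrite Cerf_ray_integral.
  destruct (ray_integral (RtoC (- x))) as [e1 e2]; unfold Re in *; simpl in *.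
  unfold Cexp, Re, Im; simpl.
  match goal with |- context [cos ?a] => replace a with 0 by ring end.
  match goal with |- context [sin ?a] => replace a with 0 by ring end.
  replace (- x * - x - 0 * 0) with (x * x) by ring.
  rewrite cos_0, sin_0. pose proof (exp_pos (x * x)). set (E := exp (x * x)) in *.
  assert (0 <= E * (2 / sqrt PI * - e1)) by (apply Rmult_le_pos; nra). lra.
Qed.

(* Numerical inequality 2 sqrt t / sqrt pi <= 1 + t/2 <= e^{t/2}, using sqrt pi > 1.7. *)
Lemma sqrt_le_exp_half (t : R) : 0 <= t -> 2 * sqrt t / sqrt PI <= exp (t / 2).
Proof.
  intros Ht.
  assert (Hpi : 1.7 < sqrt PI).
  { apply Rsqr_incrst_0; [| lra | apply sqrt_pos].
    unfold Rsqr; rewrite sqrt_sqrt by (left; apply PI_RGT_0).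
    pose proof PI2_3_2; lra. }
  assert (Hst : sqrt t * sqrt t = t) by (apply sqrt_sqrt, Ht).
  pose proof (sqrt_pos t). pose proof (exp_ineq1_le (t / 2)).
  apply Rle_trans with (1 + t / 2); [|lra].
  apply Rmult_le_reg_r with (sqrt PI); [lra|].
  unfold Rdiv at 1. rewrite Rmult_assoc, Rinv_l, Rmult_1_r by lra.
  pose proof (Rle_0_sqr (sqrt t - 1.2)); unfold Rsqr in *. nra.
Qed.

Lemma Csqrt_i_mult (t : R) : 0 < t -> Csqrt (Ci * RtoC t)%C = (sqrt (t / 2), sqrt (t / 2)).
Proof.
  intros Ht.
  assert (Hit : (Ci * RtoC t)%C = (0, t))
    by (unfold Cmult, Ci, RtoC; apply injective_projections; simpl; ring).
  assert (Hmod : Cmod (0, t) = t).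
  { unfold Cmod; simpl. replace (0 * (0 * 1) + t * (t * 1)) with (t * t) by ring.
    apply sqrt_square; lra. }
  rewrite Hit. unfold Csqrt, Re, Im; simpl. rewrite Hmod.
  destruct (Rle_dec 0 t); [|lra].
  apply injective_projections; simpl; f_equal; [|ring_simplify]; f_equal; field.
Qed.

Theorem mainTheorem13 (t : R) (z : C) (ht : 0 < t) :
  Cmod (Rfun t z) <=
  2 * Re (Lambda (RtoC (- (sqrt t / sqrt 2)))) * exp (Rabs (Re z)).
Proof.
  set (q := sqrt (t / 2)).
  assert (Hq : 0 < q) by (apply sqrt_lt_R0; lra).
  assert (Hqq : q * q = t / 2) by (apply sqrt_sqrt; lra).
  unfold Rfun; cbv zeta. rewrite (Csqrt_i_mult t ht); fold q.
  assert (Hs : (q, q) <> RtoC 0) by (intros H; injection H; lra).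
  assert (Hss : Re ((q, q) * (q, q))%C = 0) by (unfold Re, Cmult; simpl; ring).
  assert (Hmod : Cmod (q, q) = sqrt t) by (unfold Cmod; simpl; f_equal; nra).
  eapply Rle_trans; [apply (Lambda_pair_bound z (q, q) Hs Hss)|].
  rewrite Hmod. apply Rmult_le_compat_r; [left; apply exp_pos|].
  assert (Hx : sqrt t / sqrt 2 * (sqrt t / sqrt 2) = t / 2).
  { rewrite <- sqrt_div_alt by lra. apply sqrt_sqrt; lra. }
  assert (Hx0 : 0 <= sqrt t / sqrt 2)
    by (apply Rdiv_le_0_compat; [apply sqrt_pos | apply sqrt_lt_R0; lra]).
  pose proof (Lambda_neg_real_ge _ Hx0) as HL. rewrite Hx in HL.
  pose proof (sqrt_le_exp_half t (Rlt_le _ _ ht)) as Hexp.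
  unfold Rdiv in *. lra.
Qed.
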